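(* Let $f:[0,\infty)\to[0,\infty)$ be continuous, and let $\varphi=\frac{\sqrt5+1}{2}$. Then the following are equivalent: (a) $f(f(x))=x\,f(x)$ for all $x\ge 0$; (b) either $f(x)=0$ for all $x\ge 0$, or $f(x)=x^{\varphi}$ for all $x\ge 0$. *)

From Stdlib Require Import Reals.
Open Scope R_scope.

Definition phi : R := (sqrt 5 + 1) / 2.

(* x^a for x >= 0 and a > 0, with the convention 0^a = 0
   (Stdlib's Rpower 0 a is exp (a * ln 0) = 1, which is wrong at 0). *)
Definition rpow0 (x a : R) : R := if Rle_dec x 0 then 0 else Rpower x a.

Definition nonneg_half_line (x : R) : Prop := 0 <= x.

(** In logarithmic coordinates [h t = ln (f (exp t))] the equation becomes
    [h (h t) = t + h t].  For a nondecreasing surjective [h] every [s] has a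
    preimage [p] with [|p| <= |s|], and the deviation [d t = h t - phi t]
    satisfies [d p = - phi * d s] because [phi^2 = phi + 1].  Iterating along
    preimages gives [phi^n |d s| <= phi |s|] for all [n], so [d = 0].  The
    continuity of [f] is used, through the intermediate value theorem, to show
    that a nonzero solution is positive, increasing and onto on (0, oo), so
    that [h] is defined and has these properties. *)

From Stdlib Require Import Reals Lra Classical.
Open Scope R_scope.

Lemma phi_sq : phi * phi = phi + 1.
Proof. unfold phi; pose proof (sqrt_sqrt 5 ltac:(lra)); nra. Qed.

Lemma phi_gt1 : 1 < phi.
Proof.
  unfold phi; pose proof (sqrt_sqrt 5 ltac:(lra)); pose proof (sqrt_pos 5); nra.
Qed.

Lemma le0_of_pow_mul_bounded (q a b : R) :
  1 < q -> (forall n, q ^ n * a <= b) -> a <= 0.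
Proof.
  intros Hq Hb; apply Rnot_lt_le; intros Ha.
  destruct (Pow_x_infinity q ltac:(rewrite Rabs_pos_eq; lra) (b / a + 1)) as [N HN].
  specialize (HN N (le_n N)); rewrite Rabs_pos_eq in HN by (apply pow_le; lra).
  assert ((b / a + 1) * a <= q ^ N * a) by (apply Rmult_le_compat_r; lra).
  assert (b / a * a = b) by (field; lra).
  specialize (Hb N); lra.
Qed.

Section AdditiveEquation.

Variable h : R -> R.
Hypothesis h_mono : forall s t, s <= t -> h s <= h t.
Hypothesis h_surj : forall s, exists p, h p = s.
Hypothesis h_eq : forall t, h (h t) = t + h t.

Lemma h_0 : h 0 = 0.
Proof.
  assert (Hc : h (h 0) = h 0) by (rewrite h_eq; ring).
  pose proof (h_eq (h 0)) as Hcc; rewrite !Hc in Hcc; lra.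
Qed.

Lemma abs_le_abs_h t : Rabs t <= Rabs (h t).
Proof.
  destruct (h_surj t) as [p <-]; rewrite h_eq.
  destruct (Rle_dec 0 p) as [Hp | Hp].
  - assert (0 <= h p) by (rewrite <- h_0; auto).
    rewrite !Rabs_pos_eq; lra.
  - assert (h p <= 0) by (rewrite <- h_0; apply h_mono; lra).
    rewrite !Rabs_left1; lra.
Qed.

Let dev t := h t - phi * t.

Lemma dev_preimage p : dev p = - phi * dev (h p).
Proof.
  unfold dev; rewrite h_eq.
  replace (- phi * (p + h p - phi * h p)) with (- phi * p - phi * h p + phi * phi * h p)
    by ring.
  rewrite phi_sq; ring.
Qed.

Lemma abs_dev_le s : Rabs (dev s) <= phi * Rabs s.
Proof.
  destruct (h_surj s) as [p Hp].
  assert (Hd : dev s = p - (phi - 1) * s) by (unfold dev; rewrite <- Hp, h_eq; ring).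
  pose proof (abs_le_abs_h p); pose proof phi_gt1; rewrite Hp in *; rewrite Hd.
  eapply Rle_trans; [apply Rabs_triang|].
  rewrite Rabs_Ropp, Rabs_mult, (Rabs_pos_eq (phi - 1)) by lra; lra.
Qed.

Lemma pow_phi_abs_dev_le n s : phi ^ n * Rabs (dev s) <= phi * Rabs s.
Proof.
  revert s; induction n as [| n IH]; intros s.
  - rewrite pow_O, Rmult_1_l; apply abs_dev_le.
  - destruct (h_surj s) as [p <-].
    pose proof (IH p) as Hp; pose proof (abs_le_abs_h p); pose proof phi_gt1.
    rewrite dev_preimage, Rabs_mult, Rabs_Ropp, (Rabs_pos_eq phi) in Hp by lra.
    simpl; nra.
Qed.

Lemma h_eq_phi_mul t : h t = phi * t.
Proof.
  assert (Rabs (dev t) <= 0).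
  { apply (le0_of_pow_mul_bounded phi _ (phi * Rabs t)); [exact phi_gt1|].
    intros n; apply pow_phi_abs_dev_le. }
  destruct (Req_dec (dev t) 0) as [Hd | Hd].
  - unfold dev in Hd; lra.
  - pose proof (Rabs_pos_lt _ Hd); lra.
Qed.

End AdditiveEquation.

Lemma Rmax0_dist x y : Rabs (Rmax 0 y - Rmax 0 x) <= Rabs (y - x).
Proof.
  unfold Rmax; destruct (Rle_dec 0 y), (Rle_dec 0 x);
    unfold Rabs; repeat destruct Rcase_abs; lra.
Qed.

Lemma IVT_half_line (f : R -> R)
  (hcont : forall x, 0 <= x -> limit1_in f nonneg_half_line (f x) x) a b v :
  0 <= a <= b -> (f a - v) * (f b - v) <= 0 -> exists z, a <= z <= b /\ f z = v.
Proof.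
  intros [Ha Hab] Hv.
  set (g t := f (Rmax 0 t) - v).
  assert (Hg : continuity g).
  { intros x eps Heps.
    destruct (hcont (Rmax 0 x) (Rmax_l 0 x) eps Heps) as [alp [Halp Hf]].
    exists alp; split; [exact Halp|]; intros y [_ Hy]; simpl in *; unfold R_dist in *.
    unfold g; replace (f (Rmax 0 y) - v - (f (Rmax 0 x) - v))
      with (f (Rmax 0 y) - f (Rmax 0 x)) by ring.
    apply Hf; split; [apply Rmax_l|].
    simpl; unfold R_dist; eapply Rle_lt_trans; [apply Rmax0_dist | exact Hy]. }
  assert (Hpos : forall t, 0 <= t -> g t = f t - v)
    by (intros t Ht; unfold g; rewrite Rmax_right; auto).
  destruct (IVT_cor g a b Hg Hab) as [z [Hz Hgz]].
  - rewrite !Hpos; lra.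
  - exists z; split; [exact Hz|]; rewrite Hpos in Hgz; lra.
Qed.

Section MultiplicativeEquation.

Variable f : R -> R.
Hypothesis hmaps : forall x, 0 <= x -> 0 <= f x.
Hypothesis hcont : forall x, 0 <= x -> limit1_in f nonneg_half_line (f x) x.
Hypothesis f_eq : forall x, 0 <= x -> f (f x) = x * f x.

Let ivt := IVT_half_line f hcont.

Lemma f_0 : f 0 = 0.
Proof.
  pose proof (f_eq 0 ltac:(lra)) as H0; rewrite Rmult_0_l in H0.
  pose proof (f_eq (f 0) (hmaps 0 ltac:(lra))) as H1; rewrite H0 in H1; lra.
Qed.

Lemma f_inj_pos a b : 0 <= a -> 0 <= b -> f a = f b -> 0 < f a -> a = b.
Proof.
  intros Ha Hb Hab Hpos; pose proof (f_eq a Ha); pose proof (f_eq b Hb).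
  apply (Rmult_eq_reg_r (f a)); [congruence | lra].
Qed.

Lemma f_lt_of_pos s t : 0 <= s -> s < t -> 0 < f t -> f s < f t.
Proof.
  intros Hs Hst Hft; apply Rnot_le_lt; intros Hge.
  destruct (ivt 0 s (f t)) as [u [Hu Hfu]];
    [lra | rewrite f_0; pose proof (hmaps s Hs); nra |].
  assert (u = t) by (apply f_inj_pos; lra); lra.
Qed.

Lemma f_pos_below x0 y : 0 <= x0 -> 0 < y <= f x0 -> 0 < f y.
Proof.
  intros Hx0 Hy.
  destruct (ivt 0 x0 y) as [u [Hu Hfu]]; [lra | rewrite f_0; nra |].
  assert (u <> 0) by (intros ->; rewrite f_0 in Hfu; lra).
  rewrite <- Hfu, f_eq, Hfu by lra; apply Rmult_lt_0_compat; lra.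
Qed.

Lemma f_pos_above t t' : 0 <= t <= t' -> 0 < f t -> 0 < f t'.
Proof.
  intros Ht Hft; apply Rnot_le_lt; intros Hle.
  assert (f t' = 0) by (pose proof (hmaps t' ltac:(lra)); lra).
  destruct (ivt t t' (f t / 2)) as [u [Hu Hfu]]; [lra | nra |].
  assert (t <> u) by (intros <-; lra).
  assert (f t < f u) by (apply f_lt_of_pos; lra); lra.
Qed.

Lemma f_pos_of_nonzero x0 : 0 <= x0 -> 0 < f x0 -> forall x, 0 < x -> 0 < f x.
Proof.
  intros Hx0 Hfx0 x Hx; destruct (Rle_lt_dec x (f x0)).
  - apply (f_pos_below x0); lra.
  - apply (f_pos_above (f x0)); [lra|]; apply (f_pos_below x0); lra.
Qed.

Section PositiveSolution.

Hypothesis f_pos : forall x, 0 < x -> 0 < f x.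

Lemma f_increasing s t : 0 <= s -> s < t -> f s < f t.
Proof. intros; apply f_lt_of_pos, f_pos; lra. Qed.

Lemma f_onto y : 0 <= y -> exists p, 0 <= p /\ f p = y.
Proof.
  intros Hy; pose proof (f_pos 1 ltac:(lra)) as Hf1.
  set (x := 1 + y / f 1).
  assert (Hyx : y < x * f 1).
  { unfold x; replace ((1 + y / f 1) * f 1) with (f 1 + y) by (field; lra); lra. }
  assert (Hx : 1 <= x).
  { assert (0 <= y / f 1) by (apply Rmult_le_pos; [|left; apply Rinv_0_lt_compat]; lra).
    unfold x; lra. }
  assert (Hfx : f 1 <= f x).
  { destruct (Req_dec x 1) as [-> | Hne]; [lra|]; left; apply f_increasing; lra. }
  destruct (ivt 0 (f x) y) as [p [Hp Hfp]].
  - pose proof (hmaps x ltac:(lra)); lra.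
  - assert (x * f 1 <= x * f x) by (apply Rmult_le_compat_l; lra).
    rewrite f_0, f_eq by lra; nra.
  - exists p; split; [lra | exact Hfp].
Qed.

Let h t := ln (f (exp t)).

Lemma log_conj_mono s t : s <= t -> h s <= h t.
Proof.
  intros [Hst | <-]; [|lra]; unfold h; left.
  pose proof (exp_pos s); pose proof (exp_increasing s t Hst).
  apply ln_increasing; [apply f_pos; lra | apply f_increasing; lra].
Qed.

Lemma log_conj_surj s : exists t, h t = s.
Proof.
  destruct (f_onto (exp s)) as [p [Hp Hfp]]; [left; apply exp_pos|].
  assert (p <> 0) by (intros ->; rewrite f_0 in Hfp; pose proof (exp_pos s); lra).
  exists (ln p); unfold h; rewrite exp_ln, Hfp by lra; apply ln_exp.
Qed.

Lemma log_conj_eq t : h (h t) = t + h t.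
Proof.
  pose proof (exp_pos t); pose proof (f_pos (exp t) ltac:(lra)).
  unfold h; rewrite exp_ln, f_eq, ln_mult, ln_exp by lra; reflexivity.
Qed.

Lemma f_eq_Rpower x : 0 < x -> f x = Rpower x phi.
Proof.
  intros Hx; unfold Rpower.
  rewrite <- (h_eq_phi_mul h log_conj_mono log_conj_surj log_conj_eq (ln x)).
  unfold h; rewrite (exp_ln x Hx), exp_ln; [reflexivity | apply f_pos, Hx].
Qed.

End PositiveSolution.

End MultiplicativeEquation.

Lemma rpow0_phi_eq x : 0 <= x -> rpow0 (rpow0 x phi) phi = x * rpow0 x phi.
Proof.
  intros Hx; unfold rpow0; destruct (Rle_dec x 0) as [Hle | Hnle].
  - destruct (Rle_dec 0 0); [ring | lra].
  - assert (Hpos : 0 < Rpower x phi) by apply exp_pos.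
    destruct (Rle_dec (Rpower x phi) 0); [lra|].
    rewrite Rpower_mult, phi_sq, Rpower_plus, Rpower_1 by lra; ring.
Qed.

Theorem theorem2 (f : R -> R)
  (hmaps : forall x, 0 <= x -> 0 <= f x)
  (hcont : forall x, 0 <= x -> limit1_in f nonneg_half_line (f x) x) :
  (forall x, 0 <= x -> f (f x) = x * f x) <->
  ((forall x, 0 <= x -> f x = 0) \/ (forall x, 0 <= x -> f x = rpow0 x phi)).
Proof.
  split.
  - intros f_eq.
    destruct (classic (exists x0, 0 <= x0 /\ 0 < f x0)) as [[x0 [Hx0 Hfx0]] | Hnz].
    + right; intros x Hx; unfold rpow0; destruct (Rle_dec x 0).
      * replace x with 0 by lra; exact (f_0 f hmaps f_eq).
      * apply (f_eq_Rpower f hmaps hcont f_eq); [|lra].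
        exact (f_pos_of_nonzero f hmaps hcont f_eq x0 Hx0 Hfx0).
    + left; intros x Hx.
      destruct (Rle_lt_or_eq_dec 0 (f x) (hmaps x Hx)) as [Hlt | ->]; [|reflexivity].
      exfalso; apply Hnz; exists x; auto.
  - intros [Hzero | Hphi] x Hx.
    + rewrite (Hzero x Hx), (Hzero 0) by lra; ring.
    + assert (Hfx : 0 <= rpow0 x phi).
      { unfold rpow0; destruct (Rle_dec x 0); [lra | left; apply exp_pos]. }
      rewrite (Hphi x Hx), Hphi by exact Hfx; apply rpow0_phi_eq, Hx.
Qed.
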